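(* For every ordinal $\alpha$: if $(T^*_\alpha,P^*_\alpha)$ is consistent (i.e. $T^{*+}_\alpha\cap T^{*-}_\alpha=\emptyset$ and $P^{*+}_\alpha\cap P^{*-}_\alpha=\emptyset$), then it is sound$^*$, i.e. for every $\mathcal L$-sentence $\varphi$, if either $\#\varphi\in P_0^{*-}$ or $(\mathbb N,T^*_\alpha,P^*_\alpha)\models_{SK}\varphi\vee\neg\varphi$, then $(\mathbb N,T^*_\alpha,P^*_\alpha)\not\models_{SK}\mathscr P(\varphi)$.
   Context: Language. Let $\mathcal L_{\mathbb N}$ be the language of first-order Peano arithmetic and $\mathcal L=\mathcal L_{\mathbb N}\cup\{\mathrm T,\mathrm P\}$ with unary predicates $\mathrm T,\mathrm P$. $\mathcal L$-formulas are in Tait style: literals are $s=t$, $s\neq t$, $\mathrm Tt$, $\neg\mathrm Tt$, $\mathrm Pt$, $\neg\mathrm Pt$; formulas are built from literals by $\wedge,\vee,\forall,\exists$; negation of an arbitrary formula is defined by De Morgan dualities with $\neg\neg\varphi:=\varphi$. A standard Gödel numbering is fixed; $\#e$ is the code of $e$, $\ulcorner e\urcorner$ the numeral of $\#e$, $\mathrm{val}(t)$ the value of a closed term $t$, $\dot\neg$ the primitive recursive function with $\dot\neg(\#\varphi)=\#\neg\varphi$; $\mathrm T\varphi,\mathrm P\varphi$ abbreviate $\mathrm T\ulcorner\varphi\urcorner,\mathrm P\ulcorner\varphi\urcorner$. Semantics. A partial model is $(\mathbb N,T,P)$ with $\mathbb N$ the standard model and $T=(T^+,T^-)$, $P=(P^+,P^-)$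 pairs of subsets of $\omega$. Strong Kleene satisfaction $\models_{SK}$: arithmetic literals evaluated in $\mathbb N$; $\mathrm Tt$ satisfied iff $\mathrm{val}(t)\in T^+$, $\neg\mathrm Tt$ iff $\mathrm{val}(t)\in T^-$, likewise for $\mathrm P$ with $P^\pm$; conjunction iff both, disjunction iff at least one, $\forall x\varphi(x)$ iff all numeral instances, $\exists x\varphi(x)$ iff some numeral instance. Base paradoxicality. $\mathrm{PA}[\mathrm{SK}]$ is the two-sided sequent calculus for Strong Kleene logic with identity in $\mathcal L$ (initial sequents $\varphi\Rightarrow\varphi$, cut, weakening, the rule from $\Gamma\Rightarrow\Delta,\varphi$ infer $\neg\varphi,\Gamma\Rightarrow\Delta$, usual rules for $\wedge,\vee,\forall,\exists$, reflexivity $\Rightarrow t=t$, replacement from $\Gamma\Rightarrow\Delta,\varphi(t)$ infer $\Gamma\Rightarrow\Delta,s\neq t,\varphi(s)$) plus the initial sequents of Peano arithmetic and the induction rule for all $\mathcal L$-formulas. A sentence $\varphi$ is base paradoxical iff $\mathrm{PA}[\mathrm{SK}]$ derives $\varphi\Leftrightarrow\neg\mathrm T\varphi$ and $\neg\varphi\Leftrightarrow\mathrm T\varphi$ ($\Leftrightarrow$ meaning both sequents). $B(x)$ is an $\mathcal L_{\mathbb N}$-formula defining in $\mathbb N$ the set of codes of base paradoxical sentences, and $\Pi(x):=B(x)\vee B(\dot\neg x)$. Paradoxicality clauses. Let $\mathscr P(x)$ be the $\mathcal L$-formula which is the disjunction of: (1) $x$ codes a sentence and $\Pi(x)$; (2)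 $x$ codes a sentence $\mathrm Tt$ ($t$ a closed term) and $\mathrm P(\mathrm{val}(t))$; (3) $x$ codes a sentence $\neg\mathrm Tt$ and $\mathrm P(\mathrm{val}(t))$; (4) $x$ codes a sentence $\psi\wedge\theta$ and $(\mathrm P\psi\wedge\mathrm P\theta)\vee(\mathrm T\psi\wedge\mathrm P\theta)\vee(\mathrm T\theta\wedge\mathrm P\psi)$; (5) $x$ codes a sentence $\psi\vee\theta$ and $(\mathrm P\psi\wedge\mathrm P\theta)\vee(\neg\mathrm T\psi\wedge\mathrm P\theta)\vee(\neg\mathrm T\theta\wedge\mathrm P\psi)$; (6) $x$ codes a sentence $\forall v\psi$ and $\exists y\,\mathrm P\psi(\dot y)\wedge\forall y(\mathrm P\psi(\dot y)\vee\mathrm T\psi(\dot y))$; (7) $x$ codes a sentence $\exists v\psi$ and $\exists y\,\mathrm P\psi(\dot y)\wedge\forall y(\mathrm P\psi(\dot y)\vee\neg\mathrm T\psi(\dot y))$; here $\psi(\dot y)$ is the code of the result of substituting the numeral of $y$ for $v$. Write $\mathscr P(\varphi)$ for $\mathscr P(\ulcorner\varphi\urcorner)$. Modified sequence. Let $P_0^{*-}$ be the set of codes of the sentences $\mathrm P\ulcorner\varphi\urcorner$ for $\varphi$ an $\mathcal L$-formula. Define $\Gamma^*_{\mathscr{TP}}(T,P)=\big((\{\#\varphi:(\mathbb N,T,P)\models_{SK}\varphi\},\{\#\varphi:(\mathbb N,T,P)\models_{SK}\neg\varphi\}),(\{\#\varphi:(\mathbb N,T,P)\models_{SK}\mathscr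 P(\varphi)\},\{\#\varphi:(\mathbb N,T,P)\models_{SK}\varphi\vee\neg\varphi\}\cup P_0^{*-})\big)$, $\varphi$ ranging over $\mathcal L$-sentences. Define $(T^*_0,P^*_0)=((\emptyset,\emptyset),(\emptyset,P_0^{*-}))$, $(T^*_{\xi+1},P^*_{\xi+1})=\Gamma^*_{\mathscr{TP}}(T^*_\xi,P^*_\xi)$, and $(T^*_\lambda,P^*_\lambda)=\bigcup_{\xi<\lambda}(T^*_\xi,P^*_\xi)$ (componentwise union) for limit $\lambda$. *)

From Stdlib Require Import List Arith.
Import ListNotations.

Inductive term : Type :=
| Var (n : nat) | Zero | Succ (t : term) | Plus (s t : term) | Times (s t : term).

Inductive formula : Type :=
| Eq (s t : term) | Neq (s t : term)
| Tr (t : term) | NTr (t : term)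
| Pa (t : term) | NPa (t : term)
| And (A B : formula) | Or (A B : formula)
| All (v : nat) (A : formula) | Ex (v : nat) (A : formula).

Fixpoint neg (A : formula) : formula :=
  match A with
  | Eq s t => Neq s t | Neq s t => Eq s t
  | Tr t => NTr t | NTr t => Tr t
  | Pa t => NPa t | NPa t => Pa t
  | And A B => Or (neg A) (neg B) | Or A B => And (neg A) (neg B)
  | All v A => Ex v (neg A) | Ex v A => All v (neg A)
  end.

Fixpoint fvt (t : term) : list nat :=
  match t with
  | Var n => [n] | Zero => []
  | Succ t => fvt t
  | Plus s t | Times s t => fvt s ++ fvt t
  end.

Fixpoint fv (A : formula) : list nat :=
  match A with
  | Eq s t | Neq s t => fvt s ++ fvt t
  | Tr t | NTr t | Pa t | NPa t => fvt t
  | And A B | Or A B => fv A ++ fv B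
  | All v A | Ex v A => remove Nat.eq_dec v (fv A)
  end.

Definition fvl (G : list formula) : list nat := flat_map fv G.

Definition closed_term (t : term) : Prop := fvt t = [].
Definition sentence (A : formula) : Prop := fv A = [].

Fixpoint subst_t (v : nat) (u t : term) : term :=
  match t with
  | Var n => if Nat.eqb n v then u else Var n
  | Zero => Zero
  | Succ t => Succ (subst_t v u t)
  | Plus s t => Plus (subst_t v u s) (subst_t v u t)
  | Times s t => Times (subst_t v u s) (subst_t v u t)
  end.

Fixpoint subst (v : nat) (u : term) (A : formula) : formula :=
  match A with
  | Eq s t => Eq (subst_t v u s) (subst_t v u t)
  | Neq s t => Neq (subst_t v u s) (subst_t v u t)
  | Tr t => Tr (subst_t v u t) | NTr t => NTr (subst_t v u t)
  | Pa t => Pa (subst_t v u t) | NPa t => NPa (subst_t v u t)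
  | And A B => And (subst v u A) (subst v u B)
  | Or A B => Or (subst v u A) (subst v u B)
  | All w A => if Nat.eqb w v then All w A else All w (subst v u A)
  | Ex w A => if Nat.eqb w v then Ex w A else Ex w (subst v u A)
  end.

Fixpoint free_for (u : term) (v : nat) (A : formula) : Prop :=
  match A with
  | And A B | Or A B => free_for u v A /\ free_for u v B
  | All w A' | Ex w A' =>
      ~ In v (fv A) \/ (~ In w (fvt u) /\ free_for u v A')
  | _ => True
  end.

Fixpoint num (n : nat) : term :=
  match n with 0 => Zero | S k => Succ (num k) end.

Fixpoint valt (t : term) : nat :=
  match t with
  | Var _ => 0 | Zero => 0
  | Succ t => S (valt t)
  | Plus s t => valt s + valt t
  | Times s t => valt s * valt t
  end.

Definition pair (a b : nat) : nat := (a + b) * (a + b + 1) / 2 + b.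

Fixpoint code_t (t : term) : nat :=
  match t with
  | Var n => pair 0 n
  | Zero => pair 1 0
  | Succ t => pair 2 (code_t t)
  | Plus s t => pair 3 (pair (code_t s) (code_t t))
  | Times s t => pair 4 (pair (code_t s) (code_t t))
  end.

Fixpoint code (A : formula) : nat :=
  match A with
  | Eq s t => pair 0 (pair (code_t s) (code_t t))
  | Neq s t => pair 1 (pair (code_t s) (code_t t))
  | Tr t => pair 2 (code_t t)
  | NTr t => pair 3 (code_t t)
  | Pa t => pair 4 (code_t t)
  | NPa t => pair 5 (code_t t)
  | And A B => pair 6 (pair (code A) (code B))
  | Or A B => pair 7 (pair (code A) (code B))
  | All v A => pair 8 (pair v (code A))
  | Ex v A => pair 9 (pair v (code A))
  end.

Definition quote (A : formula) : term := num (code A).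

Record model : Type := Model {
  Tp : nat -> Prop; Tm : nat -> Prop;
  Pp : nat -> Prop; Pm : nat -> Prop
}.

Inductive sat (M : model) : formula -> Prop :=
| sat_eq s t : valt s = valt t -> sat M (Eq s t)
| sat_neq s t : valt s <> valt t -> sat M (Neq s t)
| sat_tr t : Tp M (valt t) -> sat M (Tr t)
| sat_ntr t : Tm M (valt t) -> sat M (NTr t)
| sat_pa t : Pp M (valt t) -> sat M (Pa t)
| sat_npa t : Pm M (valt t) -> sat M (NPa t)
| sat_and A B : sat M A -> sat M B -> sat M (And A B)
| sat_orl A B : sat M A -> sat M (Or A B)
| sat_orr A B : sat M B -> sat M (Or A B)
| sat_all v A : (forall n, sat M (subst v (num n) A)) -> sat M (All v A)
| sat_ex v A n : sat M (subst v (num n) A) -> sat M (Ex v A).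

(* Sequents are lists read as sets (weakening/exchange/contraction are
   covered by the weakening rule stated with list inclusion). *)
Inductive prv : list formula -> list formula -> Prop :=
| r_init A : prv [A] [A]
| r_cut G D A : prv G (A :: D) -> prv (A :: G) D -> prv G D
| r_weak G D G' D' : prv G D -> incl G G' -> incl D D' -> prv G' D'
| r_negL G D A : prv G (A :: D) -> prv (neg A :: G) D
| r_andL1 G D A B : prv (A :: G) D -> prv (And A B :: G) D
| r_andL2 G D A B : prv (B :: G) D -> prv (And A B :: G) D
| r_andR G D A B : prv G (A :: D) -> prv G (B :: D) -> prv G (And A B :: D)
| r_orL G D A B : prv (A :: G) D -> prv (B :: G) D -> prv (Or A B :: G) D
| r_orR1 G D A B : prv G (A :: D) -> prv G (Or A B :: D)
| r_orR2 G D A B : prv G (B :: D) -> prv G (Or A B :: D)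
| r_allL G D v A t : free_for t v A ->
    prv (subst v t A :: G) D -> prv (All v A :: G) D
| r_allR G D v A y : free_for (Var y) v A ->
    ~ In y (fvl G) -> ~ In y (fvl D) -> ~ In y (fv (All v A)) ->
    prv G (subst v (Var y) A :: D) -> prv G (All v A :: D)
| r_exL G D v A y : free_for (Var y) v A ->
    ~ In y (fvl G) -> ~ In y (fvl D) -> ~ In y (fv (Ex v A)) ->
    prv (subst v (Var y) A :: G) D -> prv (Ex v A :: G) D
| r_exR G D v A t : free_for t v A ->
    prv G (subst v t A :: D) -> prv G (Ex v A :: D)
| r_refl t : prv [] [Eq t t]
| r_repl G D v A s t : free_for s v A -> free_for t v A ->
    prv G (subst v t A :: D) -> prv G (Neq s t :: subst v s A :: D)
| ax_succ0 t : prv [] [Neq (Succ t) Zero]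
| ax_succinj s t : prv [] [Neq (Succ s) (Succ t); Eq s t]
| ax_plus0 s : prv [] [Eq (Plus s Zero) s]
| ax_plusS s t : prv [] [Eq (Plus s (Succ t)) (Succ (Plus s t))]
| ax_times0 s : prv [] [Eq (Times s Zero) Zero]
| ax_timesS s t : prv [] [Eq (Times s (Succ t)) (Plus (Times s t) s)]
| r_ind G D v A y t :
    free_for (Var y) v A -> free_for (Succ (Var y)) v A -> free_for t v A ->
    ~ In y (fvl G) -> ~ In y (fvl D) -> ~ In y (fv (All v A)) ->
    prv (subst v (Var y) A :: G) (subst v (Succ (Var y)) A :: D) ->
    prv (subst v Zero A :: G) (subst v t A :: D).

Definition biprv (A B : formula) : Prop := prv [A] [B] /\ prv [B] [A].

Definition base_paradoxical (A : formula) : Prop :=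
  sentence A /\ biprv A (neg (Tr (quote A))) /\ biprv (neg A) (Tr (quote A)).

Definition Bset (n : nat) : Prop :=
  exists A, base_paradoxical A /\ code A = n.

(* Unfolding of (N,T,P) |=_SK P(n-bar), clause by clause; the arithmetical
   parts (coding facts, B) are evaluated in the standard model.
   For x = #phi, (dot-neg x) = #(neg phi). *)
Definition Psat (M : model) (n : nat) : Prop :=
  (exists A, sentence A /\ code A = n /\ (Bset (code A) \/ Bset (code (neg A))))
  \/ (exists t, closed_term t /\ code (Tr t) = n /\ Pp M (valt t))
  \/ (exists t, closed_term t /\ code (NTr t) = n /\ Pp M (valt t))
  \/ (exists A B, sentence (And A B) /\ code (And A B) = n /\
        ((Pp M (code A) /\ Pp M (code B)) \/ (Tp M (code A) /\ Pp M (code B))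
         \/ (Tp M (code B) /\ Pp M (code A))))
  \/ (exists A B, sentence (Or A B) /\ code (Or A B) = n /\
        ((Pp M (code A) /\ Pp M (code B)) \/ (Tm M (code A) /\ Pp M (code B))
         \/ (Tm M (code B) /\ Pp M (code A))))
  \/ (exists v A, sentence (All v A) /\ code (All v A) = n /\
        (exists y, Pp M (code (subst v (num y) A))) /\
        (forall y, Pp M (code (subst v (num y) A)) \/ Tp M (code (subst v (num y) A))))
  \/ (exists v A, sentence (Ex v A) /\ code (Ex v A) = n /\
        (exists y, Pp M (code (subst v (num y) A))) /\
        (forall y, Pp M (code (subst v (num y) A)) \/ Tm M (code (subst v (num y) A)))).

Definition P0m (n : nat) : Prop := exists A, n = code (Pa (quote A)).

Definition GammaTP (M : model) : model := {|
  Tp := fun n => exists A, sentence A /\ code A = n /\ sat M A;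
  Tm := fun n => exists A, sentence A /\ code A = n /\ sat M (neg A);
  Pp := fun n => exists A, sentence A /\ code A = n /\ Psat M (code A);
  Pm := fun n => (exists A, sentence A /\ code A = n /\ sat M (Or A (neg A))) \/ P0m n
|}.

Definition stage0 : model := {|
  Tp := fun _ => False; Tm := fun _ => False; Pp := fun _ => False; Pm := P0m |}.

Definition union_below {I : Type} (lt : I -> I -> Prop) (S : I -> model) (i : I)
  : model := {|
  Tp := fun n => exists j, lt j i /\ Tp (S j) n;
  Tm := fun n => exists j, lt j i /\ Tm (S j) n;
  Pp := fun n => exists j, lt j i /\ Pp (S j) n;
  Pm := fun n => exists j, lt j i /\ Pm (S j) n |}.

Definition meq (M N : model) : Prop :=
  (forall n, Tp M n <-> Tp N n) /\ (forall n, Tm M n <-> Tm N n) /\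
  (forall n, Pp M n <-> Pp N n) /\ (forall n, Pm M n <-> Pm N n).

(* A well-order (I, lt): elements of I stand for ordinals (the order type
   of their predecessors). *)
Definition well_order {I : Type} (lt : I -> I -> Prop) : Prop :=
  well_founded lt /\ (forall a b c, lt a b -> lt b c -> lt a c) /\
  (forall a b, lt a b \/ a = b \/ lt b a).

Definition star_sequence {I : Type} (lt : I -> I -> Prop) (S : I -> model) : Prop :=
  forall i,
    ((forall j, ~ lt j i) -> meq (S i) stage0) /\
    (forall j, lt j i -> (forall k, ~ (lt j k /\ lt k i)) -> meq (S i) (GammaTP (S j))) /\
    ((exists j, lt j i) -> (forall j, lt j i -> exists k, lt j k /\ lt k i) ->
       meq (S i) (union_below lt S i)).

Definition consistent (M : model) : Prop :=
  (forall n, ~ (Tp M n /\ Tm M n)) /\ (forall n, ~ (Pp M n /\ Pm M n)).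

Definition sound_star (M : model) : Prop :=
  forall A, sentence A -> (P0m (code A) \/ sat M (Or A (neg A))) -> ~ Psat M (code A).

From Stdlib Require Import List Arith Lia Classical Wf_nat.
Import ListNotations.

(* At a consistent stage a every verdict of T+, T- and
   P+ was issued at an earlier stage, and the stages increase; so T+ and T- are correct for
   truth at a, every member of P+ satisfies script-P at a, and, since the earlier stages are
   sound, no sentence is in P+ and in T+ or T-.  Under these conditions an induction on the
   complexity of phi shows that a decided phi cannot satisfy script-P(phi): a base
   paradoxical sentence is undecided because PA[SK] is sound for consistent partial models,
   and each compositional clause of script-P would put a decided, simpler sentence into P+.
   Finally the sentences P<phi> of P0*- are never base paradoxical. *)

Lemma pair_lt a b c d : a + b < c + d -> pair a b < pair c d.
Proof.
  unfold pair; intros Hlt.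
  assert (Hle : (a + b + 1) * (a + b + 1 + 1) / 2 <= (c + d) * (c + d + 1) / 2)
    by (apply Nat.Div0.div_le_mono; nia).
  replace ((a + b + 1) * (a + b + 1 + 1)) with ((a + b) * (a + b + 1) + (a + b + 1) * 2) in Hle
    by ring.
  rewrite Nat.div_add in Hle by lia. lia.
Qed.

Lemma pair_inj a b c d : pair a b = pair c d -> a = c /\ b = d.
Proof.
  intros Heq.
  destruct (lt_eq_lt_dec (a + b) (c + d)) as [[Hlt | Hsum] | Hlt].
  - apply pair_lt in Hlt; lia.
  - unfold pair in Heq; rewrite Hsum in Heq; lia.
  - apply pair_lt in Hlt; lia.
Qed.

Lemma code_t_inj s t : code_t s = code_t t -> s = t.
Proof.
  revert t; induction s; intros []; simpl; intros Heq;
    apply pair_inj in Heq as [Htag Hargs]; try discriminate;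
    try (apply pair_inj in Hargs as [Hl Hr]); f_equal; auto.
Qed.

Lemma code_inj A B : code A = code B -> A = B.
Proof.
  revert B; induction A; intros []; simpl; intros Heq;
    apply pair_inj in Heq as [Htag Hargs]; try discriminate;
    try (apply pair_inj in Hargs as [Hl Hr]); f_equal; auto using code_t_inj.
Qed.

Lemma neg_involutive A : neg (neg A) = A.
Proof. induction A; simpl; f_equal; auto. Qed.

Fixpoint fsize (A : formula) : nat :=
  match A with
  | And A B | Or A B => S (fsize A + fsize B)
  | All _ A | Ex _ A => S (fsize A)
  | _ => 1
  end.

Lemma fsize_subst v u A : fsize (subst v u A) = fsize A.
Proof. induction A; simpl; try destruct (Nat.eqb _ v); simpl; auto. Qed.

Lemma subst_neg v u A : subst v u (neg A) = neg (subst v u A).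
Proof. induction A; simpl; try destruct (Nat.eqb _ v); simpl; f_equal; auto. Qed.

Definition upd (e : nat -> nat) (v n : nat) : nat -> nat :=
  fun x => if Nat.eqb x v then n else e x.

Lemma upd_same e v n : upd e v n v = n.
Proof. unfold upd; now rewrite Nat.eqb_refl. Qed.

Lemma upd_comm e v w m n x : v <> w -> upd (upd e w n) v m x = upd (upd e v m) w n x.
Proof.
  unfold upd; intros Hvw.
  destruct (Nat.eqb_spec x v), (Nat.eqb_spec x w); congruence.
Qed.

Fixpoint evalt (e : nat -> nat) (t : term) : nat :=
  match t with
  | Var n => e n
  | Zero => 0
  | Succ t => S (evalt e t)
  | Plus s t => evalt e s + evalt e t
  | Times s t => evalt e s * evalt e t
  end.

Fixpoint satv (M : model) (e : nat -> nat) (A : formula) : Prop :=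
  match A with
  | Eq s t => evalt e s = evalt e t
  | Neq s t => evalt e s <> evalt e t
  | Tr t => Tp M (evalt e t)
  | NTr t => Tm M (evalt e t)
  | Pa t => Pp M (evalt e t)
  | NPa t => Pm M (evalt e t)
  | And A B => satv M e A /\ satv M e B
  | Or A B => satv M e A \/ satv M e B
  | All v A => forall n, satv M (upd e v n) A
  | Ex v A => exists n, satv M (upd e v n) A
  end.

Lemma evalt_num e n : evalt e (num n) = n.
Proof. induction n; simpl; auto. Qed.

Lemma evalt_quote e A : evalt e (quote A) = code A.
Proof. apply evalt_num. Qed.

Lemma evalt_subst e v u t : evalt e (subst_t v u t) = evalt (upd e v (evalt e u)) t.
Proof. induction t; simpl; auto. unfold upd; now destruct (Nat.eqb n v). Qed.

Lemma evalt_ext e e' t : (forall x, In x (fvt t) -> e x = e' x) -> evalt e t = evalt e' t.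
Proof.
  induction t; simpl; intros Hagree; auto.
  all: rewrite IHt1, IHt2 by (intros; apply Hagree; auto using in_or_app); auto.
Qed.

Lemma satv_ext M A : forall e e', (forall x, In x (fv A) -> e x = e' x) ->
  (satv M e A <-> satv M e' A).
Proof.
  induction A; simpl; intros e e' Hagree;
    repeat rewrite (evalt_ext e e') by (intros; apply Hagree; auto using in_or_app);
    try tauto.
  - rewrite (IHA1 e e'), (IHA2 e e') by (intros; apply Hagree; auto using in_or_app); tauto.
  - rewrite (IHA1 e e'), (IHA2 e e') by (intros; apply Hagree; auto using in_or_app); tauto.
  - enough (Hbody : forall n, satv M (upd e v n) A <-> satv M (upd e' v n) A)
      by (split; intros H n; apply Hbody; auto).
    intros n; apply IHA; intros x Hx; unfold upd.
    destruct (Nat.eqb_spec x v); auto using in_in_remove.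
  - enough (Hbody : forall n, satv M (upd e v n) A <-> satv M (upd e' v n) A)
      by (split; intros [n H]; exists n; apply Hbody; auto).
    intros n; apply IHA; intros x Hx; unfold upd.
    destruct (Nat.eqb_spec x v); auto using in_in_remove.
Qed.

Lemma subst_t_notfree v u t : ~ In v (fvt t) -> subst_t v u t = t.
Proof.
  induction t; simpl; intros Hv.
  - destruct (Nat.eqb_spec n v); subst; tauto.
  - reflexivity.
  - now rewrite IHt.
  - rewrite IHt1, IHt2; auto using in_or_app.
  - rewrite IHt1, IHt2; auto using in_or_app.
Qed.

Lemma subst_notfree v u A : ~ In v (fv A) -> subst v u A = A.
Proof.
  induction A; simpl; intros Hv;
    try (rewrite ?IHA1, ?IHA2, ?subst_t_notfree; auto using in_or_app; fail).
  all: destruct (Nat.eqb_spec v0 v); subst; auto; rewrite IHA; auto using in_in_remove.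
Qed.

Lemma satv_upd_fresh M e y n A : ~ In y (fv A) -> (satv M (upd e y n) A <-> satv M e A).
Proof.
  intros Hy; apply satv_ext; intros x Hx; unfold upd.
  destruct (Nat.eqb_spec x y); congruence.
Qed.

Section SubstBinder.

Variables (M : model) (v w : nat) (t : term) (A : formula).
Hypothesis IH : forall e, free_for t v A ->
  (satv M e (subst v t A) <-> satv M (upd e v (evalt e t)) A).
Hypothesis Hfree : ~ In v (remove Nat.eq_dec w (fv A)) \/ (~ In w (fvt t) /\ free_for t v A).

Lemma satv_subst_binder e n :
  satv M (upd e w n) (if Nat.eqb w v then A else subst v t A) <->
  satv M (upd (upd e v (evalt e t)) w n) A.
Proof.
  destruct (Nat.eqb_spec w v) as [<- | Hwv].
  - apply satv_ext; intros x _; unfold upd; now destruct (Nat.eqb x w).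
  - destruct Hfree as [Hv | [Hw Hff]].
    + assert (Hv' : ~ In v (fv A)) by auto using in_in_remove.
      rewrite subst_notfree by exact Hv'.
      apply satv_ext; intros x Hx; unfold upd.
      destruct (Nat.eqb_spec x w), (Nat.eqb_spec x v); congruence.
    + rewrite IH by exact Hff.
      rewrite (evalt_ext (upd e w n) e t)
        by (intros x Hx; unfold upd; destruct (Nat.eqb_spec x w); congruence).
      apply satv_ext; intros x _; now apply upd_comm.
Qed.

End SubstBinder.

Lemma satv_subst M A : forall e v t, free_for t v A ->
  (satv M e (subst v t A) <-> satv M (upd e v (evalt e t)) A).
Proof.
  induction A as [| | | | | | A IHA B IHB | A IHA B IHB | w A IHA | w A IHA];
    intros e v u Hfree; simpl in *; try (rewrite !evalt_subst; tauto).
  - destruct Hfree; rewrite IHA, IHB by auto; tauto.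
  - destruct Hfree; rewrite IHA, IHB by auto; tauto.
  - pose proof (satv_subst_binder M v w u A (fun e => IHA e v u) Hfree e) as Hbody.
    destruct (Nat.eqb w v); split; intros H n; apply Hbody; auto.
  - pose proof (satv_subst_binder M v w u A (fun e => IHA e v u) Hfree e) as Hbody.
    destruct (Nat.eqb w v); split; intros [n H]; exists n; apply Hbody; auto.
Qed.

Lemma free_for_closed u v A : fvt u = [] -> free_for u v A.
Proof.
  intros Hu; induction A; simpl; auto.
  all: right; rewrite Hu; auto.
Qed.

Lemma fvt_num n : fvt (num n) = [].
Proof. induction n; simpl; auto. Qed.

Definition e0 : nat -> nat := fun _ => 0.

Lemma evalt_e0 t : evalt e0 t = valt t.
Proof. induction t; simpl; auto. Qed.

Lemma sat_satv M A : sat M A -> satv M e0 A.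
Proof.
  induction 1; simpl; rewrite ?evalt_e0; auto.
  - intros n; specialize (H0 n).
    rewrite satv_subst, evalt_num in H0 by apply free_for_closed, fvt_num; exact H0.
  - exists n; rewrite satv_subst, evalt_num in IHsat by apply free_for_closed, fvt_num.
    exact IHsat.
Qed.

Lemma sat_all_inv M v A : sat M (All v A) -> forall n, sat M (subst v (num n) A).
Proof. now inversion 1. Qed.

Lemma sat_ex_inv M v A : sat M (Ex v A) -> exists n, sat M (subst v (num n) A).
Proof. inversion 1; eauto. Qed.

Lemma satv_neg_inconsistent M A e : consistent M -> satv M e A -> satv M e (neg A) -> False.
Proof.
  intros [HT HP]; revert e; induction A; simpl; intros e HA HnA;
    try solve [eauto | eapply HT; split; eauto | eapply HP; split; eauto].
  - destruct HA, HnA; eauto.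
  - destruct HA, HnA; eauto.
  - destruct HnA as [n HnA]; eauto.
  - destruct HA as [n HA]; eauto.
Qed.

Lemma sat_neg_inconsistent M A : consistent M -> sat M A -> sat M (neg A) -> False.
Proof. intros HM HA HnA; exact (satv_neg_inconsistent M A e0 HM (sat_satv _ _ HA) (sat_satv _ _ HnA)). Qed.

(** * Soundness of PA[SK] for consistent partial models *)

Section Soundness.

Variable M : model.
Hypothesis HM : consistent M.

Definition valid (G D : list formula) : Prop :=
  forall e, (forall A, In A G -> satv M e A) -> exists B, In B D /\ satv M e B.

Lemma satv_upd_fresh_in e y n A G :
  ~ In y (fvl G) -> In A G -> (satv M (upd e y n) A <-> satv M e A).
Proof.
  intros Hy HA; apply satv_upd_fresh.
  intros Hin; apply Hy, in_flat_map; eauto.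
Qed.

Lemma satv_upd_eigen e y v n m A : ~ In y (remove Nat.eq_dec v (fv A)) ->
  (satv M (upd (upd e y n) v m) A <-> satv M (upd e v m) A).
Proof.
  intros Hy; apply satv_ext; intros x Hx; unfold upd.
  destruct (Nat.eqb_spec x v), (Nat.eqb_spec x y); subst; auto.
  exfalso; auto using in_in_remove.
Qed.

Lemma satv_subst_eigen e y v n A : free_for (Var y) v A ->
  ~ In y (remove Nat.eq_dec v (fv A)) ->
  (satv M (upd e y n) (subst v (Var y) A) <-> satv M (upd e v n) A).
Proof.
  intros Hff Hy; rewrite satv_subst by exact Hff; simpl.
  rewrite upd_same; now apply satv_upd_eigen.
Qed.

Lemma holds_upd_fresh G e y n : ~ In y (fvl G) ->
  (forall A, In A G -> satv M e A) -> forall A, In A G -> satv M (upd e y n) A.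
Proof. intros Hy HG A HA; rewrite (satv_upd_fresh_in e y n A G Hy HA); auto. Qed.

Lemma valid_upd_fresh G D K e y n : ~ In y (fvl D) ->
  (forall A, In A G -> satv M (upd e y n) A) -> valid G (K :: D) ->
  satv M (upd e y n) K \/ exists B, In B D /\ satv M e B.
Proof.
  intros Hy HG Hvalid.
  destruct (Hvalid _ HG) as [B [[<- | HB] HBs]]; [left; exact HBs | right].
  exists B; split; [exact HB | now rewrite <- (satv_upd_fresh_in e y n B D)].
Qed.

Lemma valid_allR G D v A y : free_for (Var y) v A ->
  ~ In y (fvl G) -> ~ In y (fvl D) -> ~ In y (fv (All v A)) ->
  valid G (subst v (Var y) A :: D) -> valid G (All v A :: D).
Proof.
  intros Hff HyG HyD HyA Hvalid e HG.
  destruct (classic (exists B, In B D /\ satv M e B)) as [[B [HB HBs]] | HD].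
  { exists B; split; [right|]; assumption. }
  exists (All v A); split; [now left|]; intros n.
  destruct (valid_upd_fresh G D _ e y n HyD (holds_upd_fresh G e y n HyG HG) Hvalid)
    as [Hinst | HD']; [|contradiction].
  now rewrite satv_subst_eigen in Hinst.
Qed.

Lemma valid_exL G D v A y : free_for (Var y) v A ->
  ~ In y (fvl G) -> ~ In y (fvl D) -> ~ In y (fv (Ex v A)) ->
  valid (subst v (Var y) A :: G) D -> valid (Ex v A :: G) D.
Proof.
  intros Hff HyG HyD HyA Hvalid e HG.
  destruct (HG (Ex v A) (in_eq _ _)) as [n Hn].
  assert (HG' : forall B, In B (subst v (Var y) A :: G) -> satv M (upd e y n) B).
  { intros B [<- | HB]; [now rewrite satv_subst_eigen|].
    apply (holds_upd_fresh G); auto using in_cons. }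
  destruct (Hvalid _ HG') as [B [HB HBs]].
  exists B; split; [exact HB | now rewrite <- (satv_upd_fresh_in e y n B D)].
Qed.

Lemma valid_ind G D v A y t :
  free_for (Var y) v A -> free_for (Succ (Var y)) v A -> free_for t v A ->
  ~ In y (fvl G) -> ~ In y (fvl D) -> ~ In y (fv (All v A)) ->
  valid (subst v (Var y) A :: G) (subst v (Succ (Var y)) A :: D) ->
  valid (subst v Zero A :: G) (subst v t A :: D).
Proof.
  intros Hff HffS Hfft HyG HyD HyA Hvalid e HG.
  destruct (classic (exists B, In B D /\ satv M e B)) as [[B [HB HBs]] | HD].
  { exists B; split; [right|]; assumption. }
  exists (subst v t A); split; [now left|].
  enough (Hall : forall n, satv M (upd e v n) A) by (rewrite satv_subst; auto).
  induction n as [| n IHn].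
  - pose proof (HG _ (in_eq _ _)) as H0.
    now rewrite satv_subst in H0 by (apply free_for_closed; reflexivity).
  - assert (HG' : forall B, In B (subst v (Var y) A :: G) -> satv M (upd e y n) B).
    { intros B [<- | HB]; [now rewrite satv_subst_eigen|].
      apply (holds_upd_fresh G); auto using in_cons. }
    destruct (valid_upd_fresh _ D _ e y n HyD HG' Hvalid) as [Hsucc | HD']; [|contradiction].
    rewrite satv_subst in Hsucc by exact HffS; simpl in Hsucc.
    now rewrite upd_same, satv_upd_eigen in Hsucc.
Qed.

Lemma valid_repl G D v A s t : free_for s v A -> free_for t v A ->
  valid G (subst v t A :: D) -> valid G (Neq s t :: subst v s A :: D).
Proof.
  intros Hffs Hfft Hvalid e HG.
  destruct (Hvalid e HG) as [C [[<- | HC] HCs]]; [|exists C; simpl; auto].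
  destruct (Nat.eq_dec (evalt e s) (evalt e t)) as [Hst | Hst].
  - exists (subst v s A); split; [simpl; auto|].
    rewrite satv_subst, Hst, <- satv_subst by assumption; exact HCs.
  - exists (Neq s t); simpl; auto.
Qed.

Theorem prv_valid G D : prv G D -> valid G D.
Proof.
  induction 1 as [A | G D A _ IH1 _ IH2 | G D G' D' _ IH HG HD | G D A _ IH
    | G D A B _ IH | G D A B _ IH | G D A B _ IH1 _ IH2 | G D A B _ IH1 _ IH2
    | G D A B _ IH | G D A B _ IH | G D v A t Hff _ IH | G D v A y Hff HyG HyD HyA _ IH
    | G D v A y Hff HyG HyD HyA _ IH | G D v A t Hff _ IH | t | G D v A s t Hffs Hfft _ IH
    | t | s t | s | s t | s | s t | G D v A y t Hff HffS Hfft HyG HyD HyA _ IH];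
    intros e HG'; simpl in *.
  - exists A; split; auto.
  - destruct (IH1 e HG') as [B [[<- | HB] HBs]]; [|eauto].
    apply IH2; intros C [<- | HC]; auto.
  - destruct (IH e) as [B [HB HBs]]; eauto.
  - destruct (IH e) as [B [[<- | HB] HBs]]; eauto.
    exfalso; eapply (satv_neg_inconsistent M A e HM); eauto.
  - apply IH; intros C [<- | HC]; [apply (HG' (And A B)) | apply HG']; auto.
  - apply IH; intros C [<- | HC]; [apply (HG' (And A B)) | apply HG']; auto.
  - destruct (IH1 e HG') as [C [[<- | HC] HCs]]; [|eauto].
    destruct (IH2 e HG') as [C [[<- | HC] HCs']]; [|eauto].
    exists (And A B); simpl; auto.
  - destruct (HG' (Or A B) (in_eq _ _)) as [HA | HB];
      [apply IH1 | apply IH2]; intros C [<- | HC]; auto.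
  - destruct (IH e HG') as [C [[<- | HC] HCs]]; [exists (Or A B) | exists C]; simpl; auto.
  - destruct (IH e HG') as [C [[<- | HC] HCs]]; [exists (Or A B) | exists C]; simpl; auto.
  - apply IH; intros C [<- | HC]; auto.
    rewrite satv_subst by exact Hff; apply (HG' (All v A)); auto.
  - exact (valid_allR G D v A y Hff HyG HyD HyA IH e HG').
  - exact (valid_exL G D v A y Hff HyG HyD HyA IH e HG').
  - destruct (IH e HG') as [C [[<- | HC] HCs]]; [exists (Ex v A) | exists C]; simpl; auto.
    split; auto; exists (evalt e t); now rewrite <- satv_subst.
  - exists (Eq t t); simpl; auto.
  - exact (valid_repl G D v A s t Hffs Hfft IH e HG').
  - exists (Neq (Succ t) Zero); simpl; auto.
  - destruct (Nat.eq_dec (evalt e s) (evalt e t)).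
    + exists (Eq s t); simpl; auto.
    + exists (Neq (Succ s) (Succ t)); simpl; auto.
  - exists (Eq (Plus s Zero) s); simpl; auto with arith.
  - exists (Eq (Plus s (Succ t)) (Succ (Plus s t))); simpl; auto with arith.
  - exists (Eq (Times s Zero) Zero); simpl; auto with arith.
  - exists (Eq (Times s (Succ t)) (Plus (Times s t) s)); simpl; auto with arith.
  - exact (valid_ind G D v A y t Hff HffS Hfft HyG HyD HyA IH e HG').
Qed.

End Soundness.

Corollary prv_single_sound M A B : consistent M -> prv [A] [B] -> satv M e0 A -> satv M e0 B.
Proof.
  intros HM Hprv HA.
  destruct (prv_valid M HM _ _ Hprv e0) as [C [[<- | []] HC]]; [|exact HC].
  intros C [<- | []]; exact HA.
Qed.

Definition T_false_model : model :=
  Model (fun _ => False) (fun _ => True) (fun _ => False) (fun _ => False).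

(* In T_false_model every sentence [~T<phi>] holds while [P t] and [~P t] fail. *)
Lemma not_base_paradoxical_P t : ~ base_paradoxical (Pa t) /\ ~ base_paradoxical (NPa t).
Proof.
  assert (Hcons : consistent T_false_model) by (split; simpl; tauto).
  split; intros (_ & (_ & Hprv) & _); simpl in Hprv;
    exact (prv_single_sound _ _ _ Hcons Hprv I).
Qed.

Definition Psat_clause (M : model) (A : formula) : Prop :=
  match A with
  | Tr t | NTr t => Pp M (valt t)
  | And B C =>
      (Pp M (code B) /\ Pp M (code C)) \/ (Tp M (code B) /\ Pp M (code C))
      \/ (Tp M (code C) /\ Pp M (code B))
  | Or B C =>
      (Pp M (code B) /\ Pp M (code C)) \/ (Tm M (code B) /\ Pp M (code C))
      \/ (Tm M (code C) /\ Pp M (code B))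
  | All v B =>
      (exists y, Pp M (code (subst v (num y) B))) /\
      (forall y, Pp M (code (subst v (num y) B)) \/ Tp M (code (subst v (num y) B)))
  | Ex v B =>
      (exists y, Pp M (code (subst v (num y) B))) /\
      (forall y, Pp M (code (subst v (num y) B)) \/ Tm M (code (subst v (num y) B)))
  | _ => False
  end.

Lemma Bset_code A : Bset (code A) -> base_paradoxical A.
Proof. intros (B & HB & Hcode); apply code_inj in Hcode; now subst. Qed.

Lemma Psat_code M A : Psat M (code A) ->
  base_paradoxical A \/ base_paradoxical (neg A) \/ Psat_clause M A.
Proof.
  unfold Psat; intros [H | [H | [H | [H | [H | [H | H]]]]]];
    first [ destruct H as (B & C & _ & Hcode & H) | destruct H as (B & _ & Hcode & H) ];
    apply code_inj in Hcode; subst; simpl; auto.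
  destruct H; auto using Bset_code.
Qed.

Lemma not_Psat_code_Pa M t : ~ Psat M (code (Pa t)).
Proof.
  pose proof (not_base_paradoxical_P t) as [HPa HNPa].
  intros HP; apply Psat_code in HP as [H | [H | H]]; auto.
Qed.

(** * Decided sentences are not paradoxical *)

Section Grounded.

Variable M : model.
Hypothesis HM : consistent M.
Hypothesis Tp_sat : forall A, Tp M (code A) -> sat M A.
Hypothesis Tm_sat : forall A, Tm M (code A) -> sat M (neg A).
Hypothesis Pp_Psat : forall n, Pp M n -> Psat M n.
Hypothesis Pp_undetermined : forall n, Pp M n -> Tp M n \/ Tm M n -> False.

Lemma base_paradoxical_undetermined C : base_paradoxical C -> ~ sat M C /\ ~ sat M (neg C).
Proof.
  intros (_ & (HC & _) & (HnC & _)).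
  assert (HnC_Tp : sat M (neg C) -> Tp M (code C)).
  { intros Hsat; pose proof (prv_single_sound M _ _ HM HnC (sat_satv _ _ Hsat)) as HTp.
    simpl in HTp; now rewrite evalt_quote in HTp. }
  assert (HnotC : ~ sat M C).
  { intros Hsat; pose proof (prv_single_sound M _ _ HM HC (sat_satv _ _ Hsat)) as HTm.
    simpl in HTm; rewrite evalt_quote in HTm.
    exact (proj1 HM _ (conj (HnC_Tp (Tm_sat _ HTm)) HTm)). }
  split; [exact HnotC|]; intros Hsat; exact (HnotC (Tp_sat _ (HnC_Tp Hsat))).
Qed.

Lemma not_Psat_clause_decided A :
  (forall B, fsize B < fsize A -> sat M B \/ sat M (neg B) -> ~ Pp M (code B)) ->
  sat M A \/ sat M (neg A) -> ~ Psat_clause M A.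
Proof.
  intros Hsmall Hdec HP.
  pose proof (fun B => sat_neg_inconsistent M B HM) as Hincons.
  destruct A as [| | t | t | | | B C | B C | v B | v B]; simpl in HP, Hsmall, Hdec;
    try contradiction.
  - apply (Pp_undetermined _ HP).
    destruct Hdec as [Hsat | Hsat]; inversion Hsat; auto.
  - apply (Pp_undetermined _ HP).
    destruct Hdec as [Hsat | Hsat]; inversion Hsat; auto.
  - pose proof (Hsmall B ltac:(lia)) as HsB; pose proof (Hsmall C ltac:(lia)) as HsC.
    pose proof (Tp_sat B) as HtB; pose proof (Tp_sat C) as HtC.
    pose proof (Hincons B) as HiB; pose proof (Hincons C) as HiC.
    destruct Hdec as [Hsat | Hsat]; inversion Hsat; subst; tauto.
  - pose proof (Hsmall B ltac:(lia)) as HsB; pose proof (Hsmall C ltac:(lia)) as HsC.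
    pose proof (Tm_sat B) as HtB; pose proof (Tm_sat C) as HtC.
    pose proof (Hincons B) as HiB; pose proof (Hincons C) as HiC.
    destruct Hdec as [Hsat | Hsat]; inversion Hsat; subst; tauto.
  - assert (Hinst : forall n, sat M (subst v (num n) B) \/ sat M (neg (subst v (num n) B)) ->
              ~ Pp M (code (subst v (num n) B)))
      by (intros n; apply Hsmall; rewrite fsize_subst; lia).
    destruct HP as [[y Hy] Hall], Hdec as [Hsat | Hsat].
    + exact (Hinst y (or_introl (sat_all_inv _ _ _ Hsat y)) Hy).
    + destruct (sat_ex_inv _ _ _ Hsat) as [n Hn]; rewrite subst_neg in Hn.
      destruct (Hall n) as [HPn | HTn]; [exact (Hinst n (or_intror Hn) HPn)|].
      exact (Hincons _ (Tp_sat _ HTn) Hn).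
  - assert (Hinst : forall n, sat M (subst v (num n) B) \/ sat M (neg (subst v (num n) B)) ->
              ~ Pp M (code (subst v (num n) B)))
      by (intros n; apply Hsmall; rewrite fsize_subst; lia).
    destruct HP as [[y Hy] Hall], Hdec as [Hsat | Hsat].
    + destruct (sat_ex_inv _ _ _ Hsat) as [n Hn].
      destruct (Hall n) as [HPn | HTn]; [exact (Hinst n (or_introl Hn) HPn)|].
      exact (Hincons _ Hn (Tm_sat _ HTn)).
    + pose proof (sat_all_inv _ _ _ Hsat y) as Hny; rewrite subst_neg in Hny.
      exact (Hinst y (or_intror Hny) Hy).
Qed.

Lemma not_Psat_decided A : sat M A \/ sat M (neg A) -> ~ Psat M (code A).
Proof.
  induction A as [A IH] using (induction_ltof1 _ fsize); unfold ltof in IH.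
  intros Hdec HP.
  apply Psat_code in HP as [Hbp | [Hbp | HP]].
  - apply base_paradoxical_undetermined in Hbp; tauto.
  - apply base_paradoxical_undetermined in Hbp; rewrite neg_involutive in Hbp; tauto.
  - refine (not_Psat_clause_decided A _ Hdec HP).
    intros B Hlt HB HPB; exact (IH B Hlt HB (Pp_Psat _ HPB)).
Qed.

End Grounded.

(** * The stages of the sequence *)

Definition submodel (M N : model) : Prop :=
  (forall n, Tp M n -> Tp N n) /\ (forall n, Tm M n -> Tm N n) /\
  (forall n, Pp M n -> Pp N n) /\ (forall n, Pm M n -> Pm N n).

Lemma submodel_trans M N K : submodel M N -> submodel N K -> submodel M K.
Proof. unfold submodel; intuition. Qed.

Lemma meq_submodel M N : meq M N -> submodel M N /\ submodel N M.
Proof. unfold meq, submodel; firstorder. Qed.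

Lemma submodel_consistent M N : submodel M N -> consistent N -> consistent M.
Proof. unfold submodel, consistent; firstorder. Qed.

Lemma sat_mono M N A : submodel M N -> sat M A -> sat N A.
Proof.
  intros (HT & HF & HP & HN); induction 1;
    solve [econstructor; eauto | apply sat_orr; auto].
Qed.

Lemma Psat_mono M N n : submodel M N -> Psat M n -> Psat N n.
Proof.
  intros (HT & HF & HP & _); unfold Psat.
  intros [H | [H | [H | [H | [H | [H | H]]]]]]; [left; exact H | right; left | do 2 right; left
    | do 3 right; left | do 4 right; left | do 5 right; left | do 6 right].
  - destruct H as (t & Ht & Hcode & Ht'); eauto.
  - destruct H as (t & Ht & Hcode & Ht'); eauto.
  - destruct H as (A & B & Hs & Hcode & H); exists A, B; intuition.
  - destruct H as (A & B & Hs & Hcode & H); exists A, B; intuition.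
  - destruct H as (v & A & Hs & Hcode & [y Hy] & Hall); exists v, A; repeat split; eauto.
    intros y'; destruct (Hall y'); auto.
  - destruct H as (v & A & Hs & Hcode & [y Hy] & Hall); exists v, A; repeat split; eauto.
    intros y'; destruct (Hall y'); auto.
Qed.

Lemma GammaTP_mono M N : submodel M N -> submodel (GammaTP M) (GammaTP N).
Proof.
  intros Hsub; unfold submodel; simpl; repeat split.
  - intros n (A & HA & Hcode & Hsat); eauto using sat_mono.
  - intros n (A & HA & Hcode & Hsat); eauto using sat_mono.
  - intros n (A & HA & Hcode & HP); eauto using Psat_mono.
  - intros n [(A & HA & Hcode & Hsat) | H0]; eauto 6 using sat_mono.
Qed.

Lemma stage_cases {I : Type} (lt : I -> I -> Prop) i :
  (forall j, ~ lt j i) \/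
  (exists j, lt j i /\ forall k, ~ (lt j k /\ lt k i)) \/
  ((exists j, lt j i) /\ forall j, lt j i -> exists k, lt j k /\ lt k i).
Proof.
  destruct (classic (exists j, lt j i)) as [Hj | Hj]; [|left; eauto].
  destruct (classic (exists j, lt j i /\ forall k, ~ (lt j k /\ lt k i))) as [Hsucc | Hlim];
    [tauto|].
  right; right; split; [exact Hj|]; intros j Hji.
  apply NNPP; intros Hno; apply Hlim; exists j; split; [exact Hji|].
  intros k Hk; apply Hno; exists k; exact Hk.
Qed.

Section Stages.

Variables (I : Type) (lt : I -> I -> Prop) (S : I -> model).
Hypothesis Hwo : well_order lt.
Hypothesis Hseq : star_sequence lt S.

Lemma stage_mono_Gamma a :
  (forall b, lt b a -> submodel (S b) (S a)) /\ submodel (S a) (GammaTP (S a)).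
Proof.
  destruct Hwo as (Hwf & Htrans & Htot).
  induction a as [a IH] using (well_founded_ind Hwf).
  destruct (Hseq a) as (Hzero & Hsucc & Hlim).
  destruct (stage_cases lt a) as [Ha | [(g & Hg & Hgmax) | (Hne & Ha)]].
  - split; [intros b Hb; exfalso; exact (Ha b Hb)|].
    apply submodel_trans with stage0; [exact (proj1 (meq_submodel _ _ (Hzero Ha)))|].
    unfold submodel; simpl; tauto.
  - destruct (meq_submodel _ _ (Hsucc g Hg Hgmax)) as [HaG HGa].
    assert (Hbelow : forall b, lt b a -> submodel (S b) (S a)).
    { intros b Hb; apply submodel_trans with (GammaTP (S g)); [|exact HGa].
      destruct (Htot b g) as [Hbg | [<- | Hgb]].
      - apply submodel_trans with (S g); [apply (IH g Hg) | apply (IH g Hg)]; auto.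
      - apply (IH b Hg).
      - exfalso; exact (Hgmax b (conj Hgb Hb)). }
    split; [exact Hbelow|].
    apply submodel_trans with (GammaTP (S g)); [exact HaG|].
    apply GammaTP_mono, Hbelow, Hg.
  - destruct (meq_submodel _ _ (Hlim Hne Ha)) as [HaU HUa].
    assert (Hbelow : forall b, lt b a -> submodel (S b) (S a)).
    { intros b Hb; apply submodel_trans with (union_below lt S a); [|exact HUa].
      unfold submodel; simpl; repeat split; intros n Hn; exists b; auto. }
    split; [exact Hbelow|].
    apply submodel_trans with (union_below lt S a); [exact HaU|].
    unfold submodel; simpl; repeat split; intros n (j & Hj & Hn);
      apply (GammaTP_mono _ _ (Hbelow j Hj)), (IH j Hj); exact Hn.
Qed.

Corollary stage_mono b a : lt b a -> submodel (S b) (S a).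
Proof. apply stage_mono_Gamma. Qed.

Lemma stage_generated a n :
  (Tp (S a) n -> exists b, lt b a /\ Tp (GammaTP (S b)) n) /\
  (Tm (S a) n -> exists b, lt b a /\ Tm (GammaTP (S b)) n) /\
  (Pp (S a) n -> exists b, lt b a /\ Pp (GammaTP (S b)) n).
Proof.
  destruct Hwo as (Hwf & Htrans & _).
  induction a as [a IH] using (well_founded_ind Hwf).
  destruct (Hseq a) as (Hzero & Hsucc & Hlim).
  destruct (stage_cases lt a) as [Ha | [(g & Hg & Hgmax) | (Hne & Ha)]].
  - destruct (Hzero Ha) as (ET & EF & EP & _); simpl in *.
    rewrite ET, EF, EP; tauto.
  - destruct (Hsucc g Hg Hgmax) as (ET & EF & EP & _).
    rewrite ET, EF, EP; repeat split; eauto.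
  - destruct (Hlim Hne Ha) as (ET & EF & EP & _); simpl in *.
    rewrite ET, EF, EP.
    repeat split; intros (j & Hj & Hn); destruct (IH j Hj) as (KT & KF & KP);
      [destruct (KT Hn) as (b & Hb & Hbn) | destruct (KF Hn) as (b & Hb & Hbn)
      | destruct (KP Hn) as (b & Hb & Hbn)]; eauto.
Qed.

Lemma stage_Tp_sat a A : Tp (S a) (code A) -> sat (S a) A.
Proof.
  intros HT; destruct (proj1 (stage_generated a _) HT) as (b & Hb & B & _ & Hcode & Hsat).
  apply code_inj in Hcode; subst; exact (sat_mono _ _ _ (stage_mono b a Hb) Hsat).
Qed.

Lemma stage_Tm_sat a A : Tm (S a) (code A) -> sat (S a) (neg A).
Proof.
  intros HF; destruct (proj1 (proj2 (stage_generated a _)) HF)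
    as (b & Hb & B & _ & Hcode & Hsat).
  apply code_inj in Hcode; subst; exact (sat_mono _ _ _ (stage_mono b a Hb) Hsat).
Qed.

Lemma stage_Pp_Psat a n : Pp (S a) n -> Psat (S a) n.
Proof.
  intros HP; destruct (proj2 (proj2 (stage_generated a _)) HP)
    as (b & Hb & B & _ & <- & HPsat).
  exact (Psat_mono _ _ _ (stage_mono b a Hb) HPsat).
Qed.

(* A P-verdict and a T-verdict on the same sentence are issued at stages b, c < a; at the
   later of the two both hold, against the soundness of that stage. *)
Lemma stage_Pp_undetermined a : consistent (S a) ->
  (forall b, lt b a -> consistent (S b) -> sound_star (S b)) ->
  forall n, Pp (S a) n -> Tp (S a) n \/ Tm (S a) n -> False.
Proof.
  intros Hcons IH n HP HTF.
  destruct (stage_generated a n) as (GT & GF & GP).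
  destruct (GP HP) as (b & Hb & A & HA & <- & HPsat).
  assert (Hdec : exists c, lt c a /\ sat (S c) (Or A (neg A))).
  { destruct HTF as [HT | HF];
      [destruct (GT HT) as (c & Hc & C & _ & Hcode & Hsat)
      | destruct (GF HF) as (c & Hc & C & _ & Hcode & Hsat)];
      apply code_inj in Hcode; subst; exists c; split; auto using sat_orl, sat_orr. }
  destruct Hdec as (c & Hc & Hsat).
  assert (Hsound : forall d, lt d a -> sound_star (S d))
    by (intros d Hd; apply IH, (submodel_consistent _ _ (stage_mono d a Hd)), Hcons; exact Hd).
  destruct Hwo as (_ & _ & Htot); destruct (Htot b c) as [Hbc | [<- | Hcb]].
  - exact (Hsound c Hc A HA (or_intror Hsat) (Psat_mono _ _ _ (stage_mono b c Hbc) HPsat)).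
  - exact (Hsound b Hb A HA (or_intror Hsat) HPsat).
  - exact (Hsound b Hb A HA (or_intror (sat_mono _ _ _ (stage_mono c b Hcb) Hsat)) HPsat).
Qed.

End Stages.

Theorem mainTheorem14 :
  forall (I : Type) (lt : I -> I -> Prop) (S : I -> model),
    well_order lt -> star_sequence lt S ->
    forall alpha : I, consistent (S alpha) -> sound_star (S alpha).
Proof.
  intros I lt S Hwo Hseq alpha.
  induction alpha as [a IH] using (well_founded_ind (proj1 Hwo)).
  intros Hcons A _ [[B HB] | Hdec] HP.
  - rewrite HB in HP; exact (not_Psat_code_Pa _ _ HP).
  - revert HP; apply not_Psat_decided;
      eauto using stage_Tp_sat, stage_Tm_sat, stage_Pp_Psat, stage_Pp_undetermined.
    inversion Hdec; auto.
Qed.
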